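(* Let $G$ be a graph on vertex set $[m]$, and let $k\ge1$. Let $y^0,\bar y^0,y^1,\bar y^1,\dots,y^{2k},\bar y^{2k}\in\mathrm{Stable}(G)$ be $4k+2$ pairwise distinct vectors satisfying $$y^i+\bar y^i=y^0+\bar y^0\quad\text{for all } i\in\{0,\dots,2k\}.$$ Define $I,J,j_0,U_i,S(i,j,t),y^*(S),\bar y^*(S)$ as in the context. Then for all $0\le i<j<t\le 2k$, both $y^*(S(i,j,t))$ and $\bar y^*(S(i,j,t))$ belong to $\mathrm{Stable}(G)$.
   Context: **Graph polytope.** For a graph $G=(V,E)$, $\mathrm{Stable}(G)=\{x\in\{0,1\}^V: x_u+x_v\le1 \text{ for every edge }\{u,v\}\in E\}$. **Index sets.** - $I=\{i\in[m]: y^0_i=\bar y^0_i\}$ and $J=[m]\setminus I=\{j: y^0_j+\bar y^0_j=1\}$. The set $J$ is nonempty. - Fix any $j_0\in J$. - For $i\in\{0,\dots,2k\}$, let $U_i=\{j\in J: y^i_j=1\}$ if $y^i_{j_0}=1$, and $U_i=\{j\in J:\bar y^i_j=1\}$ otherwise. - Let $\bar U_i=J\setminus U_i$. - For $0\le i<j<t\le2k$, let $S(i,j,t)=U_i\,\triangle\,U_j\,\triangle\,U_t$, where $\triangle$ is symmetric difference. **The vectors $y^*(S)$ and $\bar y^*(S)$.** For $S\subseteq J$: - $y^*(S)\in\{0,1\}^m$ has coordinate $y^0_p$ for $p\in I$, $1$ for $p\in S$, and $0$ for $p\in J\setminus S$; - $\bar y^*(S)$ has coordinate $y^0_p$ for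 $p\in I$, $0$ for $p\in S$, and $1$ for $p\in J\setminus S$. *)

From mathcomp Require Import all_boot.
Set Implicit Arguments. Unset Strict Implicit. Unset Printing Implicit Defensive.

(* 0/1 vectors indexed by [m] = 'I_m are boolean finite functions;
   a coordinate is read as a nat (0 or 1) via the bool >-> nat coercion. *)
Notation vec m := {ffun 'I_m -> bool}.

Definition is_graph (m : nat) (e : rel 'I_m) : Prop :=
  symmetric e /\ irreflexive e.

Definition Stable (m : nat) (e : rel 'I_m) (x : vec m) : Prop :=
  forall u v : 'I_m, e u v -> (x u + x v <= 1)%N.

Definition Iset (m : nat) (y0 yb0 : vec m) : {set 'I_m} :=
  [set p | y0 p == yb0 p].
Definition Jset (m : nat) (y0 yb0 : vec m) : {set 'I_m} :=
  ~: Iset y0 yb0.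

Definition Uset (m : nat) (J : {set 'I_m}) (j0 : 'I_m) (y yb : vec m)
  : {set 'I_m} :=
  if y j0 then [set j in J | y j] else [set j in J | yb j].

Definition symdiff (m : nat) (A B : {set 'I_m}) : {set 'I_m} :=
  (A :\: B) :|: (B :\: A).

Definition ystar (m : nat) (y0 : vec m) (J S : {set 'I_m}) : vec m :=
  [ffun p => if p \in J then p \in S else y0 p].
Definition ybarstar (m : nat) (y0 : vec m) (J S : {set 'I_m}) : vec m :=
  [ffun p => if p \in J then p \notin S else y0 p].

From mathcomp Require Import all_boot.

Set Implicit Arguments.
Unset Strict Implicit.
Unset Printing Implicit Defensive.

(* On J the vectors y0 and yb0 are complementary, and every pair (y, yb) with
   the same sum is complementary there too; so along an edge of G[J] each
   stable y flips its value, hence every U_i contains exactly one endpoint of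
   every such edge.  A symmetric difference of three such sets still does, and
   any S with this property gives stable vectors y*(S), ybar*(S): edges inside
   I are handled by y0, and an edge from J to I has y0 = yb0 = 0 at its
   I-endpoint, since y0 + yb0 = 1 at its J-endpoint. *)

Lemma in_symdiff (m : nat) (A B : {set 'I_m}) x :
  (x \in symdiff A B) = (x \in A) (+) (x \in B).
Proof. by rewrite /symdiff !inE; case: (x \in A); case: (x \in B). Qed.

Section StableRecombination.

Variables (m : nat) (e : rel 'I_m) (y0 yb0 : vec m).
Hypotheses (y0_stable : Stable e y0) (yb0_stable : Stable e yb0).

Local Notation J := (Jset y0 yb0).

Definition splits_edges (S : {set 'I_m}) : Prop :=
  forall u v, e u v -> u \in J -> v \in J -> (u \in S) = ~~ (v \in S).

Lemma in_Jset p : (p \in J) = (y0 p != yb0 p).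
Proof. by rewrite !inE. Qed.

Lemma complement_on_Jset (y yb : vec m) p :
  (y p + yb p = y0 p + yb0 p)%N -> p \in J -> yb p = ~~ y p.
Proof.
by rewrite in_Jset; case: (y p); case: (yb p); case: (y0 p); case: (yb0 p).
Qed.

Lemma stable_flips_on_Jset (y yb : vec m) u v :
  Stable e y -> Stable e yb ->
  (forall p, y p + yb p = y0 p + yb0 p)%N ->
  e u v -> u \in J -> v \in J -> y v = ~~ y u.
Proof.
move=> Hy Hyb hsum euv uJ vJ; move: (Hy u v euv) (Hyb u v euv).
rewrite !(complement_on_Jset (hsum _)) //.
by case: (y u); case: (y v).
Qed.

Lemma Uset_splits_edges (y yb : vec m) (j0 : 'I_m) :
  Stable e y -> Stable e yb ->
  (forall p, y p + yb p = y0 p + yb0 p)%N ->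
  splits_edges (Uset J j0 y yb).
Proof.
move=> Hy Hyb hsum u v euv uJ vJ.
rewrite /Uset; case: (y j0); rewrite !inE -!in_Jset uJ vJ /=.
  by rewrite (stable_flips_on_Jset Hy Hyb hsum euv uJ vJ) negbK.
rewrite !(complement_on_Jset (hsum _)) //.
by rewrite (stable_flips_on_Jset Hy Hyb hsum euv uJ vJ) negbK.
Qed.

Lemma symdiff3_splits_edges (A B C : {set 'I_m}) :
  splits_edges A -> splits_edges B -> splits_edges C ->
  splits_edges (symdiff (symdiff A B) C).
Proof.
move=> hA hB hC u v euv uJ vJ.
rewrite !in_symdiff (hA u v) // (hB u v) // (hC u v) //.
by case: (v \in A); case: (v \in B); case: (v \in C).
Qed.

Lemma setC_splits_edges (S : {set 'I_m}) :
  splits_edges S -> splits_edges (~: S).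
Proof. by move=> hS u v euv uJ vJ; rewrite !inE (hS u v). Qed.

Lemma zero_next_to_Jset x w :
  x \notin J -> w \in J ->
  (y0 x + y0 w <= 1)%N -> (yb0 x + yb0 w <= 1)%N -> y0 x = false.
Proof.
rewrite !in_Jset negbK.
by case: (y0 x); case: (y0 w); case: (yb0 x); case: (yb0 w).
Qed.

Lemma ystar_stable (S : {set 'I_m}) : splits_edges S -> Stable e (ystar y0 J S).
Proof.
move=> hS u v euv; have := y0_stable euv; have := yb0_stable euv.
rewrite !ffunE; case uJ: (u \in J); case vJ: (v \in J) => yb0uv y0uv.
- by rewrite (hS u v euv uJ vJ); case: (v \in S).
- rewrite addnC in y0uv; rewrite addnC in yb0uv.
  by rewrite (zero_next_to_Jset (negbT vJ) uJ) //; case: (u \in S).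
- by rewrite (zero_next_to_Jset (negbT uJ) vJ) //; case: (v \in S).
- exact: y0uv.
Qed.

Lemma ybarstar_stable (S : {set 'I_m}) :
  splits_edges S -> Stable e (ybarstar y0 J S).
Proof.
suff -> : ybarstar y0 J S = ystar y0 J (~: S).
  by move=> /setC_splits_edges /ystar_stable.
by apply/ffunP => p; rewrite /ybarstar /ystar !ffunE (in_setC _ S).
Qed.

End StableRecombination.

Theorem lemma1 (m : nat) (e : rel 'I_m) (k : nat)
  (y yb : 'I_(2 * k).+1 -> vec m) (j0 : 'I_m) :
  is_graph e ->
  (1 <= k)%N ->
  (forall i, Stable e (y i)) ->
  (forall i, Stable e (yb i)) ->
  (* the 4k+2 vectors are pairwise distinct *)
  injective y -> injective yb -> (forall i j, y i != yb j) ->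
  (forall i p, (y i p + yb i p = y ord0 p + yb ord0 p)%N) ->
  j0 \in Jset (y ord0) (yb ord0) ->
  let J := Jset (y ord0) (yb ord0) in
  let U := fun i => Uset J j0 (y i) (yb i) in
  forall i j t : 'I_(2 * k).+1, (i < j < t)%N ->
    Stable e (ystar (y ord0) J (symdiff (symdiff (U i) (U j)) (U t))) /\
    Stable e (ybarstar (y ord0) J (symdiff (symdiff (U i) (U j)) (U t))).
Proof.
move=> _ _ Hy Hyb _ _ _ hsum _ J U i j t _.
have U_splits s : splits_edges e (y ord0) (yb ord0) (U s).
  exact: Uset_splits_edges (Hy s) (Hyb s) (hsum s).
have S_splits := symdiff3_splits_edges (U_splits i) (U_splits j) (U_splits t).
by split; [apply: ystar_stable | apply: ybarstar_stable].
Qed.
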